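(* Let $\kappa=\frac4{27}$. For every positive integer $n$ and every $x$ the following four identities hold: $$\frac{(3n+1)x}{\kappa}\,{}_3F_2\left[\begin{matrix}-n,\frac{n+1}2,\frac{n+2}2\\ \frac23,\frac43\end{matrix};x\right]+3\,{}_3F_2\left[\begin{matrix}-n-1,\frac{n+2}2,\frac{n+1}2\\ \frac13,\frac23\end{matrix};x\right]-6\,{}_3F_2\left[\begin{matrix}-n,\frac{n+1}2,\frac n2\\ \frac13,\frac23\end{matrix};x\right]+3\,{}_3F_2\left[\begin{matrix}-n+1,\frac n2,\frac{n-1}2\\ \frac13,\frac23\end{matrix};x\right]=0;$$ $$\frac{(n+1)(3n+2)x}{2\kappa}\,{}_3F_2\left[\begin{matrix}-n,\frac{n+3}2,\frac{n+2}2\\ \frac43,\frac53\end{matrix};x\right]+(3n+4)\,{}_3F_2\left[\begin{matrix}-n-1,\frac{n+2}2,\frac{n+3}2\\ \frac23,\frac43\end{matrix};x\right]-2(3n+1)\,{}_3F_2\left[\begin{matrix}-n,\frac{n+1}2,\frac{n+2}2\\ \frac23,\frac43\end{matrix};x\right]+(3n-2)\,{}_3F_2\left[\begin{matrix}-n+1,\frac n2,\frac{n+1}2\\ \frac23,\frac43\end{matrix};x\right]=0;$$ $$\frac{(n+1)x}{\kappa}\,{}_3F_2\left[\begin{matrix}-n,\frac{n+3}2,\frac{n+2}2\\ \frac23,\frac43\end{matrix};x\right]+{}_3F_2\left[\begin{matrix}-n-1,\frac{n+2}2,\frac{n+3}2\\ \frac13,\frac23\end{matrix};x\right]-2\,{}_3F_2\left[\begin{matrix}-n,\frac{n+1}2,\frac{n+2}2\\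 \frac13,\frac23\end{matrix};x\right]+{}_3F_2\left[\begin{matrix}-n+1,\frac n2,\frac{n+1}2\\ \frac13,\frac23\end{matrix};x\right]=0;$$ $$\frac{(n+1)(n+2)x}{2\kappa}\,{}_3F_2\left[\begin{matrix}-n,\frac{n+4}2,\frac{n+3}2\\ \frac43,\frac53\end{matrix};x\right]+(n+2)\,{}_3F_2\left[\begin{matrix}-n-1,\frac{n+4}2,\frac{n+3}2\\ \frac23,\frac43\end{matrix};x\right]-2(n+1)\,{}_3F_2\left[\begin{matrix}-n,\frac{n+3}2,\frac{n+2}2\\ \frac23,\frac43\end{matrix};x\right]+n\,{}_3F_2\left[\begin{matrix}-n+1,\frac{n+2}2,\frac{n+1}2\\ \frac23,\frac43\end{matrix};x\right]=0.$$
   Context: ${}_3F_2\left[\begin{matrix}a_1,a_2,a_3\\ b_1,b_2\end{matrix};x\right]=\sum_{k\ge0}\frac{(a_1)_k(a_2)_k(a_3)_k}{(b_1)_k(b_2)_k}\frac{x^k}{k!}$, $(x)_k=x(x+1)\cdots(x+k-1)$, $(x)_0=1$; with $a_1$ a nonpositive integer these are polynomials in $x$. *)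

From HB Require Import structures.
From mathcomp Require Import all_boot all_order all_algebra.
Set Implicit Arguments. Unset Strict Implicit. Unset Printing Implicit Defensive.
Import Order.TTheory GRing.Theory Num.Theory.
Local Open Scope ring_scope.

Definition poch (R : numFieldType) (a : R) (k : nat) : R :=
  \prod_(i < k) (a + i%:R).

(* Terminating 3F2 with first upper parameter a1 = -m (m : nat):
   3F2[-m, a2, a3; b1, b2; x] = sum_{k>=0} (-m)_k (a2)_k (a3)_k / ((b1)_k (b2)_k) x^k / k!.
   Since (-m)_k = 0 for k > m, the series is the finite sum over k = 0..m. *)
Definition F32 (R : numFieldType) (m : nat) (a2 a3 b1 b2 x : R) : R :=
  \sum_(k < m.+1)
    poch (- m%:R) k * poch a2 k * poch a3 k / (poch b1 k * poch b2 k)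
    * x ^+ k / (k`!)%:R.

Definition kappa (R : numFieldType) : R := 4 / 27.

From mathcomp Require Import all_boot all_order all_algebra.
From mathcomp Require Import ring.
Import Order.TTheory GRing.Theory Num.Theory.
Set Implicit Arguments. Unset Strict Implicit. Unset Printing Implicit Defensive.
Local Open Scope ring_scope.

(* Each identity is checked coefficientwise.  Its weights on the last three
   3F2's sum to zero, so the constant terms cancel.  In the coefficient of
   x^(k+1), the rules (a)_(k+1) = a (a+1)_k and (a)_(k+1) = (a)_k (a+k) turn
   every Pochhammer symbol into a rational multiple of one of the symbols
   (.)_k occurring in the k-th coefficient of the first 3F2; what remains is
   an identity between rational functions of n and k. *)

Section Pochhammer.
Variable R : numFieldType.
Implicit Types a b : R.

Lemma poch0 a : poch a 0 = 1.
Proof. by rewrite /poch big_ord0. Qed.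

Lemma pochS a k : poch a k.+1 = poch a k * (a + k%:R).
Proof. by rewrite /poch big_ord_recr. Qed.

Lemma pochSl a b k : a + 1 = b -> poch a k.+1 = a * poch b k.
Proof.
move=> <-; rewrite /poch big_ord_recl addr0; congr (_ * _).
by apply: eq_bigr => i _; rewrite lift0 -natr1 addrA addrAC.
Qed.

Lemma poch_pred a b k : a + 1 = b -> a != 0 -> poch b k = poch a k.+1 / a.
Proof. by move=> ab a0; rewrite (pochSl k ab) mulrC mulKf. Qed.

Lemma poch_gt0 a k : 0 < a -> 0 < poch a k.
Proof. by move=> a_gt0; rewrite /poch prodr_gt0 // => i _; apply: ltr_wpDr. Qed.

Lemma poch_opp_nat_eq0 m k : (m < k)%N -> poch (- m%:R : R) k = 0.
Proof. by move=> mk; rewrite /poch (bigD1 (Ordinal mk)) //= addNr mul0r. Qed.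

End Pochhammer.

Section TerminatingF32.
Variable R : numFieldType.

Definition F32_coef (m : nat) (a2 a3 b1 b2 : R) (k : nat) : R :=
  poch (- m%:R) k * poch a2 k * poch a3 k / (poch b1 k * poch b2 k) / k`!%:R.

Lemma F32_coef0 m (a2 a3 b1 b2 : R) : F32_coef m a2 a3 b1 b2 0 = 1.
Proof. by rewrite /F32_coef !poch0 !mul1r invr1 mulr1. Qed.

Lemma F32E m (a2 a3 b1 b2 x : R) L : (m < L)%N ->
  F32 m a2 a3 b1 b2 x = \sum_(k < L) F32_coef m a2 a3 b1 b2 k * x ^+ k.
Proof.
move=> lt_mL; pose t k := F32_coef m a2 a3 b1 b2 k * x ^+ k.
rewrite /F32 (eq_bigr (fun k : 'I_m.+1 => t k)) => [|k _]; last first.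
  by rewrite /t /F32_coef mulrAC.
rewrite (big_ord_widen L t) // big_mkcond; apply: eq_bigr => k _.
case: ifPn => //; rewrite -leqNgt => lt_mk.
by rewrite /t /F32_coef poch_opp_nat_eq0 // !mul0r.
Qed.

Arguments F32E {m a2 a3 b1 b2 x} L.

Lemma mulX_sum_addE (f g : nat -> R) (x : R) L :
  x * (\sum_(k < L) f k * x ^+ k) + \sum_(k < L.+1) g k * x ^+ k
    = g 0%N + \sum_(k < L) (f k + g k.+1) * x ^+ k.+1.
Proof.
rewrite big_ord_recl expr0 mulr1 addrCA mulr_sumr -big_split /=.
by congr (_ + _); apply: eq_bigr => k _; rewrite mulrDl exprS mulrCA.
Qed.

Lemma F32_combination_eq0 n (x c d e1 e2 e3
     a2 a3 b1 b2 p2 p3 q1 q2 r2 r3 s1 s2 u2 u3 v1 v2 : R) :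
  e1 - e2 + e3 = 0 ->
  (forall k, c / d * F32_coef n.+1 a2 a3 b1 b2 k + e1 * F32_coef n.+2 p2 p3 q1 q2 k.+1
      - e2 * F32_coef n.+1 r2 r3 s1 s2 k.+1 + e3 * F32_coef n u2 u3 v1 v2 k.+1 = 0) ->
  c * x / d * F32 n.+1 a2 a3 b1 b2 x + e1 * F32 n.+2 p2 p3 q1 q2 x
    - e2 * F32 n.+1 r2 r3 s1 s2 x + e3 * F32 n u2 u3 v1 v2 x = 0.
Proof.
move=> const_eq0 coef_eq0.
rewrite (F32E n.+2) // !(F32E n.+3) //; last exact: leq_trans (leqnSn _) (leqnSn _).
pose f k := c / d * F32_coef n.+1 a2 a3 b1 b2 k.
pose g k := e1 * F32_coef n.+2 p2 p3 q1 q2 k - e2 * F32_coef n.+1 r2 r3 s1 s2 k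
  + e3 * F32_coef n u2 u3 v1 v2 k.
have -> : c * x / d * \sum_(k < n.+2) F32_coef n.+1 a2 a3 b1 b2 k * x ^+ k
          = x * \sum_(k < n.+2) f k * x ^+ k.
  by rewrite !mulr_sumr; apply: eq_bigr => k _; rewrite /f; ring.
have sum_g : \sum_(k < n.+3) g k * x ^+ k
          = e1 * (\sum_(k < n.+3) F32_coef n.+2 p2 p3 q1 q2 k * x ^+ k)
            - e2 * (\sum_(k < n.+3) F32_coef n.+1 r2 r3 s1 s2 k * x ^+ k)
            + e3 * (\sum_(k < n.+3) F32_coef n u2 u3 v1 v2 k * x ^+ k).
  rewrite !mulr_sumr -sumrN -!big_split /=; apply: eq_bigr => k _; rewrite /g; ring.
transitivity (x * (\sum_(k < n.+2) f k * x ^+ k) + \sum_(k < n.+3) g k * x ^+ k).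
  by rewrite sum_g !addrA.
rewrite mulX_sum_addE /g !F32_coef0 !mulr1 const_eq0 add0r big1 // => k _.
by rewrite /f !addrA coef_eq0 mul0r.
Qed.

End TerminatingF32.

Ltac nonzero_by_positivity := repeat (apply/andP; split); apply: lt0r_neq0; by [
    rewrite ltr0n fact_gt0
  | apply: poch_gt0; rewrite divr_gt0 ?ltr0n
  | apply: ltr_pwDl; rewrite ?mulr_ge0 ?ler0n ?ltr0n].

Section CoefficientIdentities.
Variables (R : numFieldType) (n k : nat).
(* [N] is the [N] of the statement, whose positive [n] is written [n.+1]. *)
Local Notation N := (n.+1%:R : R).

Lemma poch_opp_nat_pred : poch (- n%:R : R) k.+1 = poch (- N) k.+2 / - N.
Proof.
by apply: poch_pred; rewrite ?oppr_eq0 ?pnatr_eq0 // -natr1 opprD subrK.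
Qed.

Lemma poch_opp_nat_succ : poch (- n.+2%:R : R) k.+1 = - n.+2%:R * poch (- N) k.
Proof. by apply: pochSl; rewrite -natr1 opprD subrK. Qed.

Lemma coef_identity1 :
  (3 * N + 1) / kappa R * F32_coef n.+1 ((N + 1) / 2) ((N + 2) / 2) (2 / 3) (4 / 3) k
  + 3 * F32_coef n.+2 ((N + 2) / 2) ((N + 1) / 2) (1 / 3) (2 / 3) k.+1
  - 6 * F32_coef n.+1 ((N + 1) / 2) (N / 2) (1 / 3) (2 / 3) k.+1
  + 3 * F32_coef n (N / 2) ((N - 1) / 2) (1 / 3) (2 / 3) k.+1 = 0.
Proof.
rewrite /F32_coef poch_opp_nat_succ poch_opp_nat_pred.
rewrite (pochSl (a := 1/3) (b := 4/3)); last by field.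
rewrite (pochSl (a := N/2) (b := (N+2)/2)); last by field.
rewrite (pochSl (a := (N-1)/2) (b := (N+1)/2)); last by field.
rewrite !pochS factS natrM /kappa.
by field; nonzero_by_positivity.
Qed.

Lemma coef_identity2 :
  (N + 1) * (3 * N + 2) / (2 * kappa R)
      * F32_coef n.+1 ((N + 3) / 2) ((N + 2) / 2) (4 / 3) (5 / 3) k
  + (3 * N + 4) * F32_coef n.+2 ((N + 2) / 2) ((N + 3) / 2) (2 / 3) (4 / 3) k.+1
  - 2 * (3 * N + 1) * F32_coef n.+1 ((N + 1) / 2) ((N + 2) / 2) (2 / 3) (4 / 3) k.+1
  + (3 * N - 2) * F32_coef n (N / 2) ((N + 1) / 2) (2 / 3) (4 / 3) k.+1 = 0.
Proof.
rewrite /F32_coef poch_opp_nat_succ poch_opp_nat_pred.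
rewrite (pochSl (a := 2/3) (b := 5/3)); last by field.
rewrite (pochSl (a := N/2) (b := (N+2)/2)); last by field.
rewrite (pochSl (a := (N+1)/2) (b := (N+3)/2)); last by field.
rewrite !pochS factS natrM /kappa.
by field; nonzero_by_positivity.
Qed.

Lemma coef_identity3 :
  (N + 1) / kappa R * F32_coef n.+1 ((N + 3) / 2) ((N + 2) / 2) (2 / 3) (4 / 3) k
  + F32_coef n.+2 ((N + 2) / 2) ((N + 3) / 2) (1 / 3) (2 / 3) k.+1
  - 2 * F32_coef n.+1 ((N + 1) / 2) ((N + 2) / 2) (1 / 3) (2 / 3) k.+1
  + F32_coef n (N / 2) ((N + 1) / 2) (1 / 3) (2 / 3) k.+1 = 0.
Proof.
rewrite /F32_coef poch_opp_nat_succ poch_opp_nat_pred.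
rewrite (pochSl (a := 1/3) (b := 4/3)); last by field.
rewrite (pochSl (a := N/2) (b := (N+2)/2)); last by field.
rewrite (pochSl (a := (N+1)/2) (b := (N+3)/2)); last by field.
rewrite !pochS factS natrM /kappa.
by field; nonzero_by_positivity.
Qed.

Lemma coef_identity4 :
  (N + 1) * (N + 2) / (2 * kappa R)
      * F32_coef n.+1 ((N + 4) / 2) ((N + 3) / 2) (4 / 3) (5 / 3) k
  + (N + 2) * F32_coef n.+2 ((N + 4) / 2) ((N + 3) / 2) (2 / 3) (4 / 3) k.+1
  - 2 * (N + 1) * F32_coef n.+1 ((N + 3) / 2) ((N + 2) / 2) (2 / 3) (4 / 3) k.+1
  + N * F32_coef n ((N + 2) / 2) ((N + 1) / 2) (2 / 3) (4 / 3) k.+1 = 0.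
Proof.
rewrite /F32_coef poch_opp_nat_succ poch_opp_nat_pred.
rewrite (pochSl (a := 2/3) (b := 5/3)); last by field.
rewrite (pochSl (a := (N+2)/2) (b := (N+4)/2)); last by field.
rewrite (pochSl (a := (N+1)/2) (b := (N+3)/2)); last by field.
rewrite !pochS factS natrM /kappa.
by field; nonzero_by_positivity.
Qed.

End CoefficientIdentities.

Theorem proposition8 (R : numFieldType) (n : nat) (x : R) :
  (0 < n)%N ->
  let N := n%:R : R in
  [/\
   (3 * N + 1) * x / kappa R
       * F32 n ((N + 1) / 2) ((N + 2) / 2) (2 / 3) (4 / 3) x
     + 3 * F32 n.+1 ((N + 2) / 2) ((N + 1) / 2) (1 / 3) (2 / 3) x
     - 6 * F32 n ((N + 1) / 2) (N / 2) (1 / 3) (2 / 3) x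
     + 3 * F32 n.-1 (N / 2) ((N - 1) / 2) (1 / 3) (2 / 3) x = 0,
   (N + 1) * (3 * N + 2) * x / (2 * kappa R)
       * F32 n ((N + 3) / 2) ((N + 2) / 2) (4 / 3) (5 / 3) x
     + (3 * N + 4) * F32 n.+1 ((N + 2) / 2) ((N + 3) / 2) (2 / 3) (4 / 3) x
     - 2 * (3 * N + 1) * F32 n ((N + 1) / 2) ((N + 2) / 2) (2 / 3) (4 / 3) x
     + (3 * N - 2) * F32 n.-1 (N / 2) ((N + 1) / 2) (2 / 3) (4 / 3) x = 0,
   (N + 1) * x / kappa R
       * F32 n ((N + 3) / 2) ((N + 2) / 2) (2 / 3) (4 / 3) x
     + F32 n.+1 ((N + 2) / 2) ((N + 3) / 2) (1 / 3) (2 / 3) x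
     - 2 * F32 n ((N + 1) / 2) ((N + 2) / 2) (1 / 3) (2 / 3) x
     + F32 n.-1 (N / 2) ((N + 1) / 2) (1 / 3) (2 / 3) x = 0 &
   (N + 1) * (N + 2) * x / (2 * kappa R)
       * F32 n ((N + 4) / 2) ((N + 3) / 2) (4 / 3) (5 / 3) x
     + (N + 2) * F32 n.+1 ((N + 4) / 2) ((N + 3) / 2) (2 / 3) (4 / 3) x
     - 2 * (N + 1) * F32 n ((N + 3) / 2) ((N + 2) / 2) (2 / 3) (4 / 3) x
     + N * F32 n.-1 ((N + 2) / 2) ((N + 1) / 2) (2 / 3) (4 / 3) x = 0].
Proof.
case: n => [//|n] _ N; split.
- by apply: F32_combination_eq0 => [|k]; [ring | exact: coef_identity1].
- by apply: F32_combination_eq0 => [|k]; [ring | exact: coef_identity2].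
- rewrite -[F32 n.+2 _ _ _ _ x]mul1r -[F32 n _ _ _ _ x]mul1r.
  apply: F32_combination_eq0 => [|k]; first ring.
  by move: (coef_identity3 R n k); rewrite !mul1r.
- by apply: F32_combination_eq0 => [|k]; [ring | exact: coef_identity4].
Qed.
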